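(* For a dcpo $P$ the following are equivalent: (1) $\Sigma P$ is a $d^{\ast}$-space; (2) for every $x\in P$ and every Scott closed set $C\neq P$, the set ${\downarrow}({\uparrow}x\cap C)$ is Scott closed; (3) for every $K\in K(\Sigma P)$ and every Scott closed set $C\neq P$, the set ${\downarrow}(K\cap C)$ is Scott closed; (4) $\Sigma P$ is $S^{\ast}$-well-filtered.
   Context: A dcpo is a poset in which every directed subset has a supremum. $\Sigma P$ is $P$ with the Scott topology (a set $U$ is Scott open if $U={\uparrow}U$ and every directed $D$ with $\bigvee D\in U$ meets $U$; Scott closed sets are the complements); its specialization order is the order of $P$. For a space $X$, ${\uparrow},{\downarrow}$ are taken in the specialization order ($x\le y$ iff $x\in cl\{y\}$); $K(X)$ is the set of nonempty compact saturated (= upper) subsets; a family in $K(X)$ is filtered if any two members contain a common member. $X$ is a $d^{\ast}$-space if for every directed $D\subseteq X$, every $x\in X$ and every nonempty open $U$, $\bigcap_{d\in D}{\uparrow}d\cap{\uparrow}x\subseteq U$ implies ${\uparrow}d\cap{\uparrow}x\subseteq U$ for some $d\in D$. $X$ is $S^{\ast}$-well-filtered if for every filtered family $\{K_i\mid i\in I\}\subseteq K(X)$, every $G\in K(X)$ and every nonempty open $U$, $\bigcap_{i}K_i\cap G\subseteq U$ implies $K_i\cap G\subseteq U$ for some $i$. *)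

From Stdlib Require Import List.

Set Implicit Arguments.
Section Order.
Variable T : Type.
Variable le : T -> T -> Prop.

Definition is_partial_order : Prop :=
  (forall x, le x x) /\
  (forall x y z, le x y -> le y z -> le x z) /\
  (forall x y, le x y -> le y x -> x = y).

Definition directed (D : T -> Prop) : Prop :=
  (exists d, D d) /\
  (forall a b, D a -> D b -> exists c, D c /\ le a c /\ le b c).

Definition is_sup (D : T -> Prop) (s : T) : Prop :=
  (forall d, D d -> le d s) /\
  (forall u, (forall d, D d -> le d u) -> le s u).

Definition is_dcpo : Prop :=
  is_partial_order /\ forall D, directed D -> exists s, is_sup D s.

Definition up (x : T) : T -> Prop := fun y => le x y.
Definition upset (A : T -> Prop) : Prop := forall x y, A x -> le x y -> A y.
Definition down (A : T -> Prop) : T -> Prop := fun y => exists a, A a /\ le y a.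

Definition scott_open (U : T -> Prop) : Prop :=
  upset U /\
  forall D s, directed D -> is_sup D s -> U s -> exists d, D d /\ U d.

Definition scott_closed (C : T -> Prop) : Prop :=
  scott_open (fun x => ~ C x).

Definition scott_compact (K : T -> Prop) : Prop :=
  forall (I : Type) (U : I -> T -> Prop),
    (forall i, scott_open (U i)) ->
    (forall x, K x -> exists i, U i x) ->
    exists l : list I, forall x, K x -> exists i, In i l /\ U i x.

(* K(Sigma P): nonempty compact saturated (= upper) subsets *)
Definition KSigma (K : T -> Prop) : Prop :=
  (exists x, K x) /\ scott_compact K /\ upset K.

(* Sigma P is a d*-space (specialization order of Sigma P = le) *)
Definition dstar_space : Prop :=
  forall (D : T -> Prop) (x : T) (U : T -> Prop),
    directed D -> scott_open U -> (exists u, U u) ->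
    (forall y, (forall d, D d -> up d y) -> up x y -> U y) ->
    exists d, D d /\ (forall y, up d y -> up x y -> U y).

Definition filtered_K (F : (T -> Prop) -> Prop) : Prop :=
  (forall K, F K -> KSigma K) /\
  (exists K, F K) /\
  (forall K1 K2, F K1 -> F K2 ->
     exists K3, F K3 /\ (forall y, K3 y -> K1 y) /\ (forall y, K3 y -> K2 y)).

Definition Sstar_well_filtered : Prop :=
  forall (F : (T -> Prop) -> Prop) (G U : T -> Prop),
    filtered_K F -> KSigma G -> scott_open U -> (exists u, U u) ->
    (forall y, (forall K, F K -> K y) -> G y -> U y) ->
    exists K, F K /\ (forall y, K y -> G y -> U y).

End Order.

(* The equivalences (1) <-> (2) <-> (3) are order-theoretic rewritings of the
   d*-property, using compactness of K to pass from principal filters ↑x to K.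
   The substance is (3) -> (4), a Rudin-type argument: if every member of a
   filtered family F of compact saturated sets meets a proper Scott closed set
   C, Zorn's lemma gives a minimal Scott closed A ⊆ C still meeting every
   member of F.  By (2) and (3) the closed sets ↓(↑x ∩ A) and ↓(K ∩ A) also
   meet every member of F, so minimality forces A to be directed and every
   point of A to lie below a point of K ∩ A.  Hence sup A ∈ A lies in every
   member of F. *)
From Stdlib Require Import List Classical.
From mathcomp Require classical_sets.

Set Implicit Arguments.
Unset Strict Implicit.

Lemma directed_list_ub (A : Type) (R : A -> A -> Prop) (D : A -> Prop) :
  (forall x y z, R x y -> R y z -> R x z) -> directed R D ->
  forall l : list {d : A | D d},
    exists c, D c /\ forall i, In i l -> R (proj1_sig i) c.
Proof.
intros Rtrans [[d0 Dd0] Hub] l.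
induction l as [|[a Da] l [c [Dc Hc]]].
- exists d0. split; [exact Dd0 | intros i []].
- destruct (Hub a c Da Dc) as [e [De [ae ce]]].
  exists e. split; [exact De |].
  intros i [<- | Hi]; [exact ae | exact (Rtrans _ _ _ (Hc i Hi) ce)].
Qed.

Lemma zorn_chain_union (A : Type) (P : (A -> Prop) -> Prop) :
  (forall F : (A -> Prop) -> Prop, (forall X, F X -> P X) ->
     (forall X Y, F X -> F Y -> (forall x, X x -> Y x) \/ (forall x, Y x -> X x)) ->
     P (fun x => exists X, F X /\ X x)) ->
  exists M, P M /\ forall B, (forall x, M x -> B x) -> P B -> forall x, B x -> M x.
Proof.
intros Hchain.
destruct (classical_sets.Zorn_bigcup (P := P)) as [M [PM Hmax]].
- intros F FP Ftot.
  replace (classical_sets.bigcup F (fun X => X)) with (fun x => exists X, F X /\ X x).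
  + exact (Hchain F FP Ftot).
  + apply boolp.funext; intros x; apply boolp.propext; split.
    * intros [X [FX Xx]]; exists X; assumption.
    * intros [X FX Xx]; exists X; split; assumption.
- exists M; split; [exact PM |].
  intros B MB PB x Bx. apply NNPP; intros nMx.
  apply (Hmax B); [split; [exact MB | intros BM; exact (nMx (BM x Bx))] | exact PB].
Qed.

Section ScottTopology.
Variables (T : Type) (le : T -> T -> Prop).

Definition meets_all (F : (T -> Prop) -> Prop) (A : T -> Prop) : Prop :=
  forall K, F K -> exists k, K k /\ A k.

Definition down_meet_up_closed : Prop :=
  forall (x : T) (C : T -> Prop), scott_closed le C -> ~ (forall y, C y) ->
    scott_closed le (down le (fun y => up le x y /\ C y)).

Definition down_meet_compact_closed : Prop :=
  forall (K C : T -> Prop), KSigma le K -> scott_closed le C -> ~ (forall y, C y) ->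
    scott_closed le (down le (fun y => K y /\ C y)).

Lemma scott_open_ext (U V : T -> Prop) :
  scott_open le U -> (forall x, U x <-> V x) -> scott_open le V.
Proof.
intros [Uup Usup] UV. split.
- intros x y Vx xy. apply UV. apply (Uup x); [apply UV | ]; assumption.
- intros D s HD Hs Vs.
  destruct (Usup D s HD Hs) as [d [Dd Ud]]; [apply UV; exact Vs |].
  exists d. split; [exact Dd | apply UV; exact Ud].
Qed.

Lemma scott_closed_lower (C : T -> Prop) a b :
  scott_closed le C -> C b -> le a b -> C a.
Proof.
intros [Cup _] Cb ab. apply NNPP; intros nCa. exact (Cup a b nCa ab Cb).
Qed.

Lemma scott_closed_sup (C : T -> Prop) D s :
  scott_closed le C -> directed le D -> is_sup le D s -> (forall d, D d -> C d) -> C s.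
Proof.
intros [_ Csup] HD Hs DC. apply NNPP; intros nCs.
destruct (Csup D s HD Hs nCs) as [d [Dd nCd]]. exact (nCd (DC d Dd)).
Qed.

Lemma scott_closed_intro (C : T -> Prop) :
  (forall a b, C b -> le a b -> C a) ->
  (forall D s, directed le D -> is_sup le D s -> (forall d, D d -> C d) -> C s) ->
  scott_closed le C.
Proof.
intros Clow Csup. split.
- intros x y nCx xy Cy. exact (nCx (Clow x y Cy xy)).
- intros D s HD Hs nCs. apply NNPP; intros Hn. apply nCs, (Csup D s HD Hs).
  intros d Dd. apply NNPP; intros nCd. apply Hn. exists d. split; assumption.
Qed.

Lemma scott_closed_compl (U : T -> Prop) :
  scott_open le U -> scott_closed le (fun x => ~ U x).
Proof.
intros HU. apply (scott_open_ext HU). intros x. split.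
- intros Ux nUx. exact (nUx Ux).
- apply NNPP.
Qed.

Lemma scott_closed_diff_union (C : T -> Prop) (F : (T -> Prop) -> Prop) :
  scott_closed le C -> (forall X, F X -> scott_closed le (fun x => C x /\ ~ X x)) ->
  scott_closed le (fun x => C x /\ ~ (exists X, F X /\ X x)).
Proof.
intros HC HF. apply scott_closed_intro.
- intros a b [Cb nb] ab. split; [exact (scott_closed_lower HC Cb ab) |].
  intros [X [FX Xa]].
  refine (proj2 (scott_closed_lower (HF X FX) _ ab) Xa).
  split; [exact Cb | intros Xb; apply nb; exists X; split; assumption].
- intros D s HD Hs HDs. split.
  + apply (scott_closed_sup HC HD Hs). intros d Dd. exact (proj1 (HDs d Dd)).
  + intros [X [FX Xs]].
    refine (proj2 (scott_closed_sup (HF X FX) HD Hs _) Xs).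
    intros d Dd. destruct (HDs d Dd) as [Cd nd].
    split; [exact Cd | intros Xd; apply nd; exists X; split; assumption].
Qed.

(* Only the members of the finite subcover matter, and they sit inside one
   member of the chain. *)
Lemma compact_meets_diff_chain (K C : T -> Prop) (F : (T -> Prop) -> Prop) :
  scott_compact le K -> scott_closed le C -> (exists k, K k /\ C k) ->
  (forall X Y, F X -> F Y -> (forall x, X x -> Y x) \/ (forall x, Y x -> X x)) ->
  (forall X, F X -> scott_closed le (fun x => C x /\ ~ X x)) ->
  (forall X, F X -> exists k, K k /\ C k /\ ~ X k) ->
  exists k, K k /\ C k /\ ~ (exists X, F X /\ X k).
Proof.
intros Kcomp HC [k0 [Kk0 Ck0]] Ftot Fclosed Fmeet.
apply NNPP; intros Hn.
destruct (classic (exists X, F X)) as [[X0 FX0] | Fempty].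
2: { apply Hn. exists k0. split; [exact Kk0 | split; [exact Ck0 |]].
  intros [X [FX _]]. apply Fempty. exists X; exact FX. }
set (V := fun (i : {X | F X}) x => proj1_sig i x \/ ~ C x).
assert (Vopen : forall i, scott_open le (V i)).
{ intros [X FX]. apply (scott_open_ext (Fclosed X FX)). intros x. simpl. split.
  - intros h. apply NNPP; intros nV. apply h. split.
    + apply NNPP; intros nCx. apply nV. right; exact nCx.
    + intros Xx. apply nV. left; exact Xx.
  - intros [Xx | nCx] [Cx nXx]; contradiction. }
destruct (Kcomp _ V Vopen) as [l Hl].
{ intros k Kk. destruct (classic (C k)) as [Ck | nCk].
  - destruct (NNPP _ (fun h => Hn (ex_intro _ k (conj Kk (conj Ck h)))))
      as [X [FX Xk]].
    exists (exist _ X FX). left; exact Xk.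
  - exists (exist _ X0 FX0). right; exact nCk. }
assert (Fdir : directed (fun X Y => forall x, X x -> Y x) F).
{ split; [exists X0; exact FX0 |].
  intros X Y FX FY. destruct (Ftot X Y FX FY) as [XY | YX].
  - exists Y. split; [exact FY | split; [exact XY | intros x Yx; exact Yx]].
  - exists X. split; [exact FX | split; [intros x Xx; exact Xx | exact YX]]. }
destruct (directed_list_ub (fun X Y Z XY YZ x Xx => YZ x (XY x Xx)) Fdir l)
  as [W [FW lW]].
destruct (Fmeet W FW) as [k [Kk [Ck nWk]]].
destruct (Hl k Kk) as [i [Hi [ik | nCk]]]; [exact (nWk (lW i Hi k ik)) | exact (nCk Ck)].
Qed.

Definition minimal_meeting (F : (T -> Prop) -> Prop) (A : T -> Prop) : Prop :=
  forall B, scott_closed le B -> (forall x, B x -> A x) -> meets_all F B ->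
    forall x, A x -> B x.

(* Zorn is applied to the sets W removed from C, so that the empty chain
   corresponds to C itself. *)
Lemma exists_minimal_meeting (F : (T -> Prop) -> Prop) (C : T -> Prop) :
  (forall K, F K -> scott_compact le K) -> scott_closed le C -> meets_all F C ->
  exists A, scott_closed le A /\ (forall x, A x -> C x) /\ meets_all F A /\
    minimal_meeting F A.
Proof.
intros Fcomp HC CF.
set (P := fun W : T -> Prop =>
  scott_closed le (fun x => C x /\ ~ W x) /\ meets_all F (fun x => C x /\ ~ W x)).
destruct (@zorn_chain_union T P) as [M [[Mclosed Mmeet] Mmax]].
- intros G GP Gtot. split.
  + exact (scott_closed_diff_union HC (fun X GX => proj1 (GP X GX))).
  + intros K FK.
    destruct (compact_meets_diff_chain (Fcomp K FK) HC (CF K FK) Gtot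
                (fun X GX => proj1 (GP X GX)))
      as [k [Kk [Ck nk]]].
    * intros X GX. destruct (proj2 (GP X GX) K FK) as [k [Kk [Ck nXk]]].
      exists k. split; [exact Kk | split; assumption].
    * exists k. split; [exact Kk | split; assumption].
- exists (fun x => C x /\ ~ M x).
  split; [exact Mclosed | split; [intros x [Cx _]; exact Cx | split; [exact Mmeet |]]].
  intros B HB BA BF x [Cx nMx].
  assert (CB : forall y, C y /\ ~ (M y \/ ~ B y) <-> B y).
  { intros y. split.
    - intros [_ h]. apply NNPP; intros nBy. apply h. right; exact nBy.
    - intros By. destruct (BA y By) as [Cy nMy].
      split; [exact Cy | intros [My | nBy]; contradiction]. }
  apply NNPP; intros nBx. apply nMx.
  apply (Mmax (fun y => M y \/ ~ B y)); [intros y My; left; exact My | | right; exact nBx].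
  split.
  + apply (scott_open_ext HB). intros y. split.
    * intros nBy h. exact (nBy (proj1 (CB y) h)).
    * intros h By. exact (h (proj2 (CB y) By)).
  + intros K FK. destruct (BF K FK) as [k [Kk Bk]].
    exists k. split; [exact Kk | exact (proj2 (CB k) Bk)].
Qed.

Hypothesis HP : is_dcpo le.

Lemma dcpo_refl x : le x x.
Proof. exact (proj1 (proj1 HP) x). Qed.

Lemma dcpo_trans x y z : le x y -> le y z -> le x z.
Proof. exact (proj1 (proj2 (proj1 HP)) x y z). Qed.

Lemma down_lower (A : T -> Prop) a b : down le A b -> le a b -> down le A a.
Proof.
intros [y [Ay by_]] ab. exists y. split; [exact Ay | exact (dcpo_trans ab by_)].
Qed.

Lemma KSigma_up x : KSigma le (up le x).
Proof.
split; [| split].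
- exists x. apply dcpo_refl.
- intros I U HU Hcov. destruct (Hcov x (dcpo_refl x)) as [i Ui].
  exists (i :: nil). intros y xy. exists i.
  split; [left; reflexivity | exact (proj1 (HU i) x y Ui xy)].
- intros a b xa ab. exact (dcpo_trans xa ab).
Qed.

Lemma minimal_meeting_down (F : (T -> Prop) -> Prop) (A S : T -> Prop) :
  scott_closed le A -> minimal_meeting F A ->
  scott_closed le (down le (fun y => S y /\ A y)) -> meets_all F (fun y => S y /\ A y) ->
  forall x, A x -> down le (fun y => S y /\ A y) x.
Proof.
intros HA Amin Hdown SAF. apply (Amin _ Hdown).
- intros x [y [[_ Ay] xy]]. exact (scott_closed_lower HA Ay xy).
- intros K FK. destruct (SAF K FK) as [k [Kk SAk]].
  exists k. split; [exact Kk | exists k; split; [exact SAk | apply dcpo_refl]].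
Qed.

Lemma down_meet_up_closed_of_dstar : dstar_space le -> down_meet_up_closed.
Proof.
intros Hd x C HC nC. apply scott_closed_intro.
- intros a b Hb ab. exact (down_lower Hb ab).
- intros D s HD Hs HDs. apply NNPP; intros ns.
  destruct (Hd D x (fun y => ~ C y) HD HC) as [d [Dd dU]].
  + apply not_all_not_ex. intros h. apply nC. intros y. exact (NNPP _ (h y)).
  + intros y Dy xy Cy. apply ns. exists y.
    split; [split; assumption | exact (proj2 Hs y Dy)].
  + destruct (HDs d Dd) as [y [[xy Cy] dy]]. exact (dU y dy xy Cy).
Qed.

Lemma dstar_of_down_meet_up_closed : down_meet_up_closed -> dstar_space le.
Proof.
intros H2 D x U HD HU [u Uu] Hsub.
apply NNPP; intros Hn.
destruct (proj2 HP D HD) as [s Hs].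
assert (Hcl := H2 x _ (scott_closed_compl HU) (fun h => h u Uu)).
destruct (scott_closed_sup Hcl HD Hs) as [y [[xy nUy] sy]].
- intros d Dd. apply NNPP; intros nd. apply Hn. exists d. split; [exact Dd |].
  intros y dy xy. apply NNPP; intros nUy. apply nd.
  exists y. split; [split; assumption | exact dy].
- apply nUy, Hsub; [| exact xy].
  intros d Dd. exact (dcpo_trans (proj1 Hs d Dd) sy).
Qed.

Lemma down_meet_up_closed_of_compact : down_meet_compact_closed -> down_meet_up_closed.
Proof.
intros H3 x C. apply H3, KSigma_up.
Qed.

(* If the supremum of D were outside ↓(K ∩ C), the d*-property would give an
   open cover of K by the complements of the sets ↓(↑d ∩ C), d ∈ D; a finite
   subcover and an upper bound in D of its indices yield a contradiction. *)
Lemma down_meet_compact_closed_of_up : down_meet_up_closed -> down_meet_compact_closed.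
Proof.
intros H2 K C [_ [Kcomp Kup]] HC nC.
assert (Hd := dstar_of_down_meet_up_closed H2).
apply scott_closed_intro.
- intros a b Hb ab. exact (down_lower Hb ab).
- intros D s HD Hs HDs. apply NNPP; intros ns.
  set (W := fun (i : {d | D d}) k => ~ down le (fun y => up le (proj1_sig i) y /\ C y) k).
  destruct (Kcomp _ W (fun i => H2 (proj1_sig i) C HC nC)) as [l Hl].
  { intros k Kk.
    destruct (Hd D k (fun y => ~ C y) HD HC) as [d [Dd dk]].
    - apply not_all_not_ex. intros h. apply nC. intros y. exact (NNPP _ (h y)).
    - intros y Dy ky Cy. apply ns. exists y.
      split; [split; [exact (Kup k y Kk ky) | exact Cy] | exact (proj2 Hs y Dy)].
    - exists (exist _ d Dd). intros [y [[dy Cy] ky]]. exact (dk y dy ky Cy). }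
  destruct (directed_list_ub dcpo_trans HD l) as [c [Dc lc]].
  destruct (HDs c Dc) as [y [[Ky Cy] cy]].
  destruct (Hl y Ky) as [i [Hi Wi]]. apply Wi.
  exists y. split; [split; [exact (dcpo_trans (lc i Hi) cy) | exact Cy] | apply dcpo_refl].
Qed.

Lemma filtered_meets_closed_common_point (F : (T -> Prop) -> Prop) (C : T -> Prop) :
  down_meet_compact_closed -> filtered_K le F ->
  scott_closed le C -> ~ (forall y, C y) -> meets_all F C ->
  exists s, C s /\ forall K, F K -> K s.
Proof.
intros H3 [FK [[K0 FK0] Ffilt]] HC nC CF.
destruct (exists_minimal_meeting (fun K FK' => proj1 (proj2 (FK K FK'))) HC CF)
  as [A [HA [AC [AF Amin]]]].
assert (nA : ~ (forall y, A y)) by (intros h; apply nC; intros y; exact (AC y (h y))).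
assert (below_K : forall K, F K -> forall x, A x -> exists k, K k /\ A k /\ le x k).
{ intros K FK1 x Ax.
  destruct (minimal_meeting_down HA Amin (H3 K A (FK K FK1) HA nA)) with (x := x)
    as [k [[Kk Ak] xk]]; [| exact Ax |].
  - intros K' FK'. destruct (Ffilt K K' FK1 FK') as [K3 [FK3 [K3K K3K']]].
    destruct (AF K3 FK3) as [k [K3k Ak]].
    exists k. split; [exact (K3K' k K3k) | split; [exact (K3K k K3k) | exact Ak]].
  - exists k. split; [exact Kk | split; assumption]. }
assert (Adir : directed le A).
{ split; [destruct (AF K0 FK0) as [k [_ Ak]]; exists k; exact Ak |].
  intros a x Aa Ax.
  destruct (minimal_meeting_down HA Amin
              (down_meet_up_closed_of_compact H3 x HA nA)) with (x := a)
    as [y [[xy Ay] ay]]; [| exact Aa |].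
  - intros K FK1. destruct (below_K K FK1 x Ax) as [k [Kk [Ak xk]]].
    exists k. split; [exact Kk | split; assumption].
  - exists y. split; [exact Ay | split; assumption]. }
destruct (proj2 HP A Adir) as [s Hs].
assert (As : A s) by exact (scott_closed_sup HA Adir Hs (fun d Ad => Ad)).
exists s. split; [exact (AC s As) |].
intros K FK1. destruct (below_K K FK1 s As) as [k [Kk [Ak sk]]].
destruct (FK K FK1) as [_ [_ Kup]]. exact (Kup k s Kk (proj1 Hs k Ak)).
Qed.

Lemma Sstar_well_filtered_of_down_meet_compact :
  down_meet_compact_closed -> Sstar_well_filtered le.
Proof.
intros H3 F G U HF HG HU [u Uu] Hsub.
apply NNPP; intros Hn.
assert (HC := scott_closed_compl HU).
destruct (filtered_meets_closed_common_point (C := down le (fun y => G y /\ ~ U y)) H3 HF)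
  as [s [[y [[Gy nUy] sy]] sF]].
- exact (H3 G _ HG HC (fun h => h u Uu)).
- intros h. destruct (h u) as [y [[_ nUy] uy]]. exact (nUy (proj1 HU u y Uu uy)).
- intros K FK. apply NNPP; intros nK. apply Hn. exists K. split; [exact FK |].
  intros y Ky Gy. apply NNPP; intros nUy. apply nK.
  exists y. split; [exact Ky | exists y; split; [split; assumption | apply dcpo_refl]].
- apply nUy, Hsub; [| exact Gy].
  intros K FK. destruct (proj1 HF K FK) as [_ [_ Kup]]. exact (Kup s y (sF K FK) sy).
Qed.

(* The principal filters ↑d, d ∈ D, form a filtered family in K(ΣP). *)
Lemma dstar_of_Sstar_well_filtered : Sstar_well_filtered le -> dstar_space le.
Proof.
intros H4 D x U HD HU HUn Hsub.
set (F := fun K => exists d, D d /\ K = up le d).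
destruct (H4 F (up le x) U) as [K [[d [Dd ->]] HK]].
- split; [intros K [d [_ ->]]; apply KSigma_up | split].
  + destruct (proj1 HD) as [d Dd]. exists (up le d), d. split; [exact Dd | reflexivity].
  + intros K1 K2 [d1 [D1 ->]] [d2 [D2 ->]].
    destruct (proj2 HD d1 d2 D1 D2) as [c [Dc [d1c d2c]]].
    exists (up le c). split; [exists c; split; [exact Dc | reflexivity] |].
    split; intros y cy; [exact (dcpo_trans d1c cy) | exact (dcpo_trans d2c cy)].
- apply KSigma_up.
- exact HU.
- exact HUn.
- intros y Fy xy. apply Hsub; [| exact xy].
  intros d Dd. apply Fy. exists d. split; [exact Dd | reflexivity].
- exists d. split; [exact Dd | exact HK].
Qed.

End ScottTopology.

Theorem mainTheorem12 (T : Type) (le : T -> T -> Prop) (HP : is_dcpo le) :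
  (dstar_space le <->
     (forall (x : T) (C : T -> Prop),
        scott_closed le C -> ~ (forall y, C y) ->
        scott_closed le (down le (fun y => up le x y /\ C y)))) /\
  ((forall (x : T) (C : T -> Prop),
        scott_closed le C -> ~ (forall y, C y) ->
        scott_closed le (down le (fun y => up le x y /\ C y))) <->
     (forall (K C : T -> Prop),
        KSigma le K -> scott_closed le C -> ~ (forall y, C y) ->
        scott_closed le (down le (fun y => K y /\ C y)))) /\
  ((forall (K C : T -> Prop),
        KSigma le K -> scott_closed le C -> ~ (forall y, C y) ->
        scott_closed le (down le (fun y => K y /\ C y))) <->
     Sstar_well_filtered le).
Proof.
split; [| split]; split.
- exact (down_meet_up_closed_of_dstar HP).
- exact (dstar_of_down_meet_up_closed HP).
- exact (down_meet_compact_closed_of_up HP).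
- exact (down_meet_up_closed_of_compact HP).
- exact (Sstar_well_filtered_of_down_meet_compact HP).
- intros H4. apply (down_meet_compact_closed_of_up HP), (down_meet_up_closed_of_dstar HP).
  exact (dstar_of_Sstar_well_filtered HP H4).
Qed.
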